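(* Let $a>0$, $b>0$, and let $\chi_1,\chi_2\ge0$, $\lambda_1,\lambda_2>0$, $\mu_1,\mu_2>0$ be arbitrary. Then the system $$\begin{cases}\partial_t u=\partial_{xx}u+\partial_x\big(u\,\partial_x(\chi_2 v_2-\chi_1 v_1)\big)+u(a-bu), & x\in\mathbb{R},\\ 0=\partial_{xx}v_1-\lambda_1 v_1+\mu_1 u, & x\in\mathbb{R},\\ 0=\partial_{xx}v_2-\lambda_2 v_2+\mu_2 u, & x\in\mathbb{R}\end{cases}$$ has no traveling wave solution $(u,v_1,v_2)=(U(x-ct),V_1(x-ct),V_2(x-ct))$ with $(U,V_1,V_2)(-\infty)=(\frac ab,\frac{a\mu_1}{b\lambda_1},\frac{a\mu_2}{b\lambda_2})$, $(U,V_1,V_2)(\infty)=(0,0,0)$ and $c<2\sqrt a$.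
   Context: A traveling wave solution here is a nonnegative classical solution of the stated form with the stated limits as the argument tends to $\mp\infty$. *)

From Stdlib Require Import Reals.
From Coquelicot Require Import Coquelicot.
Open Scope R_scope.

Definition dt (w : R -> R -> R) (t x : R) : R := Derive (fun s => w s x) t.
Definition dx (w : R -> R -> R) (t x : R) : R := Derive (fun y => w t y) x.
Definition dxx (w : R -> R -> R) (t x : R) : R := Derive (fun y => dx w t y) x.

Definition C2x (w : R -> R -> R) : Prop :=
  forall t x,
    ex_derive (fun y => w t y) x /\
    ex_derive (fun y => dx w t y) x /\
    continuous (fun y => dxx w t y) x.

Definition C1t (w : R -> R -> R) : Prop :=
  forall t x,
    ex_derive (fun s => w s x) t /\
    continuous (fun s => dt w s x) t.

Definition classical_solution (a b chi1 chi2 lam1 lam2 mu1 mu2 : R)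
  (u v1 v2 : R -> R -> R) : Prop :=
  C1t u /\ C2x u /\ C2x v1 /\ C2x v2 /\
  forall t x,
    let flux := fun y => u t y * dx (fun s z => chi2 * v2 s z - chi1 * v1 s z) t y in
    ex_derive flux x /\
    dt u t x = dxx u t x + Derive flux x + u t x * (a - b * u t x) /\
    0 = dxx v1 t x - lam1 * v1 t x + mu1 * u t x /\
    0 = dxx v2 t x - lam2 * v2 t x + mu2 * u t x.

Definition traveling_wave (a b chi1 chi2 lam1 lam2 mu1 mu2 c : R)
  (U V1 V2 : R -> R) : Prop :=
  (forall z, 0 <= U z /\ 0 <= V1 z /\ 0 <= V2 z) /\
  classical_solution a b chi1 chi2 lam1 lam2 mu1 mu2
    (fun t x => U (x - c * t)) (fun t x => V1 (x - c * t))
    (fun t x => V2 (x - c * t)) /\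
  is_lim U m_infty (a / b) /\
  is_lim V1 m_infty (a * mu1 / (b * lam1)) /\
  is_lim V2 m_infty (a * mu2 / (b * lam2)) /\
  is_lim U p_infty 0 /\ is_lim V1 p_infty 0 /\ is_lim V2 p_infty 0.

From Stdlib Require Import Reals Lra Psatz FunctionalExtensionality.
From Coquelicot Require Import Coquelicot.
Open Scope R_scope.

(* At [t = 0] the wave profile solves the linear equation [U'' + p U' + q U = 0] with
   [p = c + (chi2 V2 - chi1 V1)'] and [q = a - b U + (chi2 V2 - chi1 V1)''], where the
   elliptic equations express [Vi''] through [Vi] and [U].  Since [Vi] and [Vi''] tend
   to 0 at [+oo], so does [Vi'], hence [p -> c] and [q -> a].  By uniqueness for this
   linear equation a nonnegative solution vanishing at one point vanishes everywhere,
   which [U(-oo) = a/b] excludes; so [U > 0] and [w = U'/U] solves the Riccati equation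
   [w' = -(w^2 + p w + q)].  As [c < 2 sqrt a], the right-hand side is eventually
   bounded by [-k (1 + w^2)] on [w <= 0].  Because [U -> 0], [w] is negative somewhere
   far out; it then stays nonpositive and [atan w] decreases at rate at least [k]
   forever, which is impossible for a bounded function. *)

Lemma mvt_upper_bound f f' x y k : x <= y ->
  (forall z, x <= z <= y -> derivable_pt_lim f z (f' z)) ->
  (forall z, x <= z <= y -> f' z <= k) -> f y <= f x + k * (y - x).
Proof.
  intros Hxy Hd Hk. destruct (Req_dec x y) as [<-|Hne]; [lra|].
  destruct (MVT_cor2 f f' x y) as [z [Hz Hzxy]]; [lra|exact Hd|].
  assert (f' z <= k) by (apply Hk; lra).
  assert (f' z * (y - x) <= k * (y - x)) by (apply Rmult_le_compat_r; lra).
  lra.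
Qed.

Lemma mvt_lower_bound f f' x y k : x <= y ->
  (forall z, x <= z <= y -> derivable_pt_lim f z (f' z)) ->
  (forall z, x <= z <= y -> k <= f' z) -> f x + k * (y - x) <= f y.
Proof.
  intros Hxy Hd Hk. destruct (Req_dec x y) as [<-|Hne]; [lra|].
  destruct (MVT_cor2 f f' x y) as [z [Hz Hzxy]]; [lra|exact Hd|].
  assert (k <= f' z) by (apply Hk; lra).
  assert (k * (y - x) <= f' z * (y - x)) by (apply Rmult_le_compat_r; lra).
  lra.
Qed.

(* At a minimum point [m] of [f] on [[z0, z]] other than [z], [f m <= f z0 <= 0]
   forces [f' m < 0], so [f] would drop below [f m] just to the right of [m]. *)
Lemma stays_below_start f f' z0 z : z0 <= z ->
  (forall y, z0 <= y -> derivable_pt_lim f y (f' y)) ->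
  (forall y, z0 <= y -> f y <= 0 -> f' y < 0) ->
  f z0 <= 0 -> f z <= f z0.
Proof.
  intros Hz Hd Hneg H0.
  destruct (continuity_ab_min f z0 z Hz) as [m [Hmin Hm]].
  { intros y Hy. apply derivable_continuous_pt. exists (f' y). apply Hd; lra. }
  assert (Hfm : f m <= f z0) by (apply Hmin; lra).
  destruct (Req_dec m z) as [<-|Hmz]; [exact Hfm|exfalso].
  assert (Hslope : f' m < 0) by (apply Hneg; lra).
  destruct (Hd m (proj1 Hm) (- f' m / 2)) as [d Hdd]; [lra|].
  set (h := Rmin (d / 2) ((z - m) / 2)).
  assert (Hh : 0 < h).
  { unfold h. apply Rmin_glb_lt; [destruct d; simpl; lra|lra]. }
  assert (Hhz : h <= (z - m) / 2) by apply Rmin_r.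
  assert (Hhd : h <= d / 2) by apply Rmin_l.
  assert (Hquot : Rabs ((f (m + h) - f m) / h - f' m) < - f' m / 2).
  { apply Hdd; [lra|]. rewrite Rabs_right by lra. destruct d; simpl in *; lra. }
  assert (f m <= f (m + h)) by (apply Hmin; lra).
  assert (0 <= (f (m + h) - f m) / h).
  { apply Rmult_le_pos; [lra|left; apply Rinv_0_lt_compat; lra]. }
  apply Rabs_def2 in Hquot. lra.
Qed.

Lemma continuous_bounded_on_segment f lo hi : lo <= hi ->
  (forall y, continuity_pt f y) ->
  exists K, 0 <= K /\ forall y, lo <= y <= hi -> Rabs (f y) <= K.
Proof.
  intros Hlh Hc.
  destruct (continuity_ab_maj (fun y => Rabs (f y)) lo hi Hlh) as [M [HM _]].
  { intros y _. apply (continuity_pt_comp f Rabs); [apply Hc|apply Rcontinuity_abs]. }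
  exists (Rabs (f M)). split; [apply Rabs_pos|exact HM].
Qed.

Lemma derivable_pt_lim_exp_scal k y :
  derivable_pt_lim (fun y => exp (k * y)) y (exp (k * y) * k).
Proof. apply is_derive_Reals. auto_derive; [exact I|ring]. Qed.

(* [E e^(-K y)] is nonincreasing to the right of [z0] and [E e^(K y)] is
   nondecreasing to its left. *)
Lemma gronwall_vanish E E' K lo hi z0 z : 0 <= K ->
  (forall y, derivable_pt_lim E y (E' y)) ->
  (forall y, lo <= y <= hi -> Rabs (E' y) <= K * E y) ->
  (forall y, 0 <= E y) -> lo <= z0 <= hi -> lo <= z <= hi -> E z0 = 0 -> E z = 0.
Proof.
  intros HK Hd Hb Hpos Hz0 Hz HE0.
  apply Rle_antisym; [|apply Hpos].
  destruct (Rle_or_lt z0 z) as [Hle|Hlt].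
  - assert (HF : E z * exp (- K * z) <= E z0 * exp (- K * z0) + 0 * (z - z0)).
    { apply (mvt_upper_bound (fun y => E y * exp (- K * y))
               (fun y => E' y * exp (- K * y) + E y * (exp (- K * y) * (- K)))); [exact Hle| |].
      - intros y _. apply (derivable_pt_lim_mult E (fun y => exp (- K * y))).
        + apply Hd.
        + apply derivable_pt_lim_exp_scal.
      - intros y Hy. assert (Hby : Rabs (E' y) <= K * E y) by (apply Hb; lra).
        apply Rabs_le_between in Hby. pose proof (exp_pos (- K * y)).
        assert ((E' y - K * E y) * exp (- K * y) <= 0) by (apply Rmult_le_0_r; lra).
        nra. }
    rewrite HE0 in HF. pose proof (exp_pos (- K * z)). nra.
  - assert (HF : E z * exp (K * z) + 0 * (z0 - z) <= E z0 * exp (K * z0)).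
    { apply (mvt_lower_bound (fun y => E y * exp (K * y))
               (fun y => E' y * exp (K * y) + E y * (exp (K * y) * K))); [lra| |].
      - intros y _. apply (derivable_pt_lim_mult E (fun y => exp (K * y))).
        + apply Hd.
        + apply derivable_pt_lim_exp_scal.
      - intros y Hy. assert (Hby : Rabs (E' y) <= K * E y) by (apply Hb; lra).
        apply Rabs_le_between in Hby. pose proof (exp_pos (K * y)).
        assert (0 <= (E' y + K * E y) * exp (K * y)) by (apply Rmult_le_pos; lra).
        nra. }
    rewrite HE0 in HF. pose proof (exp_pos (K * z)). nra.
Qed.

Lemma linear_ode2_energy_bound u v p q P Q : Rabs p <= P -> Rabs q <= Q ->
  Rabs (2 * u * v * (1 - q) - 2 * p * v * v) <= (1 + Q + 2 * P) * (u * u + v * v).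
Proof.
  intros Hp Hq.
  assert (Huv : Rabs (2 * u * v) <= u * u + v * v).
  { apply Rabs_le. pose proof (pow2_ge_0 (u + v)). pose proof (pow2_ge_0 (u - v)). split; nra. }
  assert (Hq1 : Rabs (1 - q) <= 1 + Q).
  { eapply Rle_trans; [apply Rabs_triang|]. rewrite Rabs_Ropp, Rabs_R1. lra. }
  assert (HP : 0 <= P) by (eapply Rle_trans; [apply Rabs_pos|exact Hp]).
  assert (H1 : Rabs (2 * u * v * (1 - q)) <= (u * u + v * v) * (1 + Q)).
  { rewrite Rabs_mult. apply Rmult_le_compat; auto using Rabs_pos. }
  assert (H2 : Rabs (2 * p * v * v) <= P * (2 * (v * v))).
  { replace (2 * p * v * v) with (p * (2 * (v * v))) by ring.
    rewrite Rabs_mult, (Rabs_right (2 * (v * v))) by nra.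
    apply Rmult_le_compat_r; nra. }
  eapply Rle_trans; [apply Rabs_triang|]. rewrite Rabs_Ropp. nra.
Qed.

Section LinearODE2.

Variables (U U1 U2 p q : R -> R).
Hypothesis dU : forall y, derivable_pt_lim U y (U1 y).
Hypothesis dU1 : forall y, derivable_pt_lim U1 y (U2 y).
Hypothesis p_cont : forall y, continuity_pt p y.
Hypothesis q_cont : forall y, continuity_pt q y.
Hypothesis ode : forall y, U2 y = - p y * U1 y - q y * U y.

(* Gronwall applied to the energy [U^2 + U'^2]. *)
Lemma linear_ode2_zero z0 : U z0 = 0 -> U1 z0 = 0 -> forall z, U z = 0.
Proof.
  intros Uz0 U1z0 z.
  set (lo := Rmin z0 z). set (hi := Rmax z0 z).
  assert (Hlh : lo <= hi) by (unfold lo, hi; eapply Rle_trans; [apply Rmin_l|apply Rmax_l]).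
  destruct (continuous_bounded_on_segment p lo hi Hlh p_cont) as [P [HP HPb]].
  destruct (continuous_bounded_on_segment q lo hi Hlh q_cont) as [Q [HQ HQb]].
  assert (HE : U z * U z + U1 z * U1 z = 0).
  { apply (gronwall_vanish (fun y => U y * U y + U1 y * U1 y)
             (fun y => U1 y * U y + U y * U1 y + (U2 y * U1 y + U1 y * U2 y))
             (1 + Q + 2 * P) lo hi z0 z).
    - lra.
    - intro y. apply (derivable_pt_lim_plus (fun y => U y * U y) (fun y => U1 y * U1 y));
        apply derivable_pt_lim_mult; auto.
    - intros y Hy. rewrite ode.
      replace (U1 y * U y + U y * U1 y + ((- p y * U1 y - q y * U y) * U1 y
                 + U1 y * (- p y * U1 y - q y * U y)))
        with (2 * U y * U1 y * (1 - q y) - 2 * p y * U1 y * U1 y) by ring.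
      apply linear_ode2_energy_bound; auto.
    - intro y. nra.
    - split; [apply Rmin_l|apply Rmax_l].
    - split; [apply Rmin_r|apply Rmax_r].
    - rewrite Uz0, U1z0. ring. }
  nra.
Qed.

(* A zero of a nonnegative [U] is a minimum, hence also a zero of [U']. *)
Lemma linear_ode2_nonneg_pos z1 :
  (forall y, 0 <= U y) -> 0 < U z1 -> forall z, 0 < U z.
Proof.
  intros Unn Uz1 z. destruct (Rle_or_lt (U z) 0) as [Hz|Hz]; [exfalso|exact Hz].
  assert (Uz : U z = 0) by (pose proof (Unn z); lra).
  assert (U1z : U1 z = 0).
  { apply (deriv_minimum U (z - 1) (z + 1) z (exist _ (U1 z) (dU z))); [lra|lra|].
    intros. rewrite Uz. apply Unn. }
  pose proof (linear_ode2_zero z Uz U1z z1). lra.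
Qed.

End LinearODE2.

(* Two mean value steps: [V'(xi) = V(y+1) - V(y)] for some [xi] in [[y, y+1]],
   and [V'(y)] differs from [V'(xi)] by at most [sup |V''|]. *)
Lemma is_lim_deriv_p_infty V V1 V2 :
  (forall y, derivable_pt_lim V y (V1 y)) ->
  (forall y, derivable_pt_lim V1 y (V2 y)) ->
  is_lim V p_infty 0 -> is_lim V2 p_infty 0 -> is_lim V1 p_infty 0.
Proof.
  intros dV dV1 LV LV2. apply is_lim_spec. intro eps.
  destruct (proj2 (is_lim_spec _ _ _) LV (mkposreal (eps / 3) ltac:(destruct eps; simpl; lra)))
    as [M0 HM0].
  destruct (proj2 (is_lim_spec _ _ _) LV2 (mkposreal (eps / 3) ltac:(destruct eps; simpl; lra)))
    as [M2 HM2].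
  simpl in HM0, HM2. exists (Rmax M0 M2). intros y Hy.
  pose proof (Rmax_l M0 M2). pose proof (Rmax_r M0 M2).
  destruct (MVT_cor2 V V1 y (y + 1)) as [xi [Hxi Hyxi]]; [lra|intros; apply dV|].
  destruct (MVT_cor2 V1 V2 y xi) as [eta [Heta Hyeta]]; [lra|intros; apply dV1|].
  assert (A1 : Rabs (V (y + 1) - 0) < eps / 3) by (apply HM0; lra).
  assert (A2 : Rabs (V y - 0) < eps / 3) by (apply HM0; lra).
  assert (A3 : Rabs (V2 eta - 0) < eps / 3) by (apply HM2; lra).
  apply Rabs_def2 in A1, A2, A3.
  replace (y + 1 - y) with 1 in Hxi by ring.
  apply Rabs_def1; nra.
Qed.

(* Only [w <= 0] is considered: for [c <= -2 sqrt a] the quadratic has positive roots. *)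
Lemma quadratic_coercive_nonpos c a : 0 < a -> c < 2 * sqrt a ->
  exists k, 0 < k /\ forall w, w <= 0 -> k * (1 + w * w) <= w * w + c * w + a.
Proof.
  intros Ha Hc. destruct (Rle_or_lt c 0) as [Hc0|Hc0].
  - exists (a / (1 + a)). split; [apply Rdiv_lt_0_compat; lra|].
    intros w Hw. assert (0 <= c * w) by nra.
    apply Rmult_le_reg_r with (1 + a); [lra|].
    replace (a / (1 + a) * (1 + w * w) * (1 + a)) with (a * (1 + w * w)) by (field; lra).
    nra.
  - assert (Hs : sqrt a * sqrt a = a) by (apply sqrt_sqrt; lra).
    assert (Hsp : 0 < sqrt a) by (apply sqrt_lt_R0; lra).
    assert (Hdisc : c * c < 4 * a) by nra.
    set (k := (4 * a - c * c) / (8 * (1 + a))).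
    assert (Hk : 0 < k) by (unfold k; apply Rdiv_lt_0_compat; lra).
    assert (Hk8 : k * (8 * (1 + a)) = 4 * a - c * c) by (unfold k; field; lra).
    exists k. split; [exact Hk|]. intros w _.
    assert (Hkdisc : 4 * (1 - k) * (a - k) >= c * c) by nra.
    assert (0 <= (2 * (1 - k) * w + c) ^ 2) by apply pow2_ge_0.
    assert (4 * (1 - k) * (w * w + c * w + a - k * (1 + w * w)) =
            (2 * (1 - k) * w + c) ^ 2 + (4 * (1 - k) * (a - k) - c * c)) by ring.
    nra.
Qed.

Lemma quadratic_coercive_perturb k c a p q w : 0 < k ->
  Rabs (p - c) < k / 4 -> Rabs (q - a) < k / 4 -> w <= 0 ->
  k * (1 + w * w) <= w * w + c * w + a -> k / 2 * (1 + w * w) <= w * w + p * w + q.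
Proof.
  intros Hk Hp Hq Hw H. apply Rabs_def2 in Hp, Hq.
  assert (k / 4 * w <= (p - c) * w) by nra.
  assert (- (1 + w * w) <= w) by nra.
  nra.
Qed.

(* Once [w <= 0] it stays so, and then [(atan w)' <= -k]: [atan w] would leave
   [(-pi/2, pi/2)] within time [pi / k]. *)
Lemma riccati_nonpos_absurd w p q k z0 : 0 < k ->
  (forall y, z0 <= y -> derivable_pt_lim w y (- (w y * w y + p y * w y + q y))) ->
  (forall y v, z0 <= y -> v <= 0 -> k * (1 + v * v) <= v * v + p y * v + q y) ->
  w z0 <= 0 -> False.
Proof.
  intros Hk dw Hcoer wz0.
  assert (Hnonpos : forall y, z0 <= y -> w y <= 0).
  { intros y Hy. apply Rle_trans with (w z0); [|exact wz0].
    apply (stays_below_start w (fun y => - (w y * w y + p y * w y + q y)) z0 y Hy dw);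
      [|exact wz0].
    intros x Hx Hwx. specialize (Hcoer x (w x) Hx Hwx).
    assert (0 < k * (1 + w x * w x)) by (apply Rmult_lt_0_compat; nra). lra. }
  pose proof PI_RGT_0 as HPI.
  set (Z := z0 + PI / k).
  assert (HZ : 0 < PI / k) by (apply Rdiv_lt_0_compat; lra).
  assert (Hatan : atan (w Z) <= atan (w z0) + (- k) * (Z - z0)).
  { apply (mvt_upper_bound (fun y => atan (w y))
             (fun y => / (1 + w y ^ 2) * - (w y * w y + p y * w y + q y))); [unfold Z; lra| |].
    - intros y Hy. apply (derivable_pt_lim_comp w atan);
        [apply dw; lra|apply derivable_pt_lim_atan].
    - intros y Hy. specialize (Hcoer y (w y) (proj1 Hy) (Hnonpos y (proj1 Hy))).
      assert (Hpos : 0 < 1 + w y ^ 2) by nra.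
      apply Rmult_le_reg_l with (1 + w y ^ 2); [exact Hpos|].
      rewrite <- Rmult_assoc, Rinv_r by lra. nra. }
  replace ((- k) * (Z - z0)) with (- PI) in Hatan by (unfold Z; field; lra).
  pose proof (atan_bound (w Z)). pose proof (atan_bound (w z0)). lra.
Qed.

Lemma exists_deriv_neg_beyond f f' M :
  (forall y, derivable_pt_lim f y (f' y)) -> (forall y, 0 < f y) ->
  is_lim f p_infty 0 -> exists z, M < z /\ f' z < 0.
Proof.
  intros df fpos Lf.
  destruct (proj2 (is_lim_spec _ _ _) Lf (mkposreal (f (M + 1)) (fpos (M + 1)))) as [N HN].
  simpl in HN. set (T := Rmax N (M + 1) + 1).
  pose proof (Rmax_l N (M + 1)). pose proof (Rmax_r N (M + 1)).
  assert (HT : f T < f (M + 1)).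
  { assert (Habs : Rabs (f T - 0) < f (M + 1)) by (apply HN; unfold T; lra).
    apply Rabs_def2 in Habs. lra. }
  destruct (MVT_cor2 f f' (M + 1) T) as [z [Hz HzT]]; [unfold T; lra|intros; apply df|].
  exists z. split; [lra|]. assert (0 < T - (M + 1)) by (unfold T; lra). nra.
Qed.

Lemma linear_ode2_no_positive_decaying U U1 U2 p q c a : 0 < a -> c < 2 * sqrt a ->
  (forall y, derivable_pt_lim U y (U1 y)) -> (forall y, derivable_pt_lim U1 y (U2 y)) ->
  (forall y, U2 y = - p y * U1 y - q y * U y) -> (forall y, 0 < U y) ->
  is_lim U p_infty 0 -> is_lim p p_infty c -> is_lim q p_infty a -> False.
Proof.
  intros Ha Hc dU dU1 ode Upos LU Lp Lq.
  destruct (quadratic_coercive_nonpos c a Ha Hc) as [k [Hk Hquad]].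
  assert (Hk4 : 0 < k / 4) by lra.
  destruct (proj2 (is_lim_spec _ _ _) Lp (mkposreal _ Hk4)) as [Mp HMp].
  destruct (proj2 (is_lim_spec _ _ _) Lq (mkposreal _ Hk4)) as [Mq HMq].
  simpl in HMp, HMq.
  destruct (exists_deriv_neg_beyond U U1 (Rmax Mp Mq) dU Upos LU) as [z0 [Hz0 U1z0]].
  pose proof (Rmax_l Mp Mq). pose proof (Rmax_r Mp Mq).
  apply (riccati_nonpos_absurd (fun y => U1 y / U y) p q (k / 2) z0); [lra| | |].
  - intros y _. pose proof (Upos y).
    replace (- (U1 y / U y * (U1 y / U y) + p y * (U1 y / U y) + q y))
      with ((U2 y * U y - U1 y * U1 y) / (U y)²)
      by (unfold Rsqr; rewrite ode; field; lra).
    apply derivable_pt_lim_div; auto; lra.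
  - intros y v Hy Hv. apply quadratic_coercive_perturb with c a; auto; [apply HMp|apply HMq]; lra.
  - left. apply Rdiv_neg_pos; [exact U1z0|apply Upos].
Qed.

Lemma derivable_pt_lim_Derive f y : ex_derive f y -> derivable_pt_lim f y (Derive f y).
Proof. intro H. apply is_derive_Reals, Derive_correct, H. Qed.

Lemma traveling_frame_at_0 (F : R -> R) c : (fun y => F (y - c * 0)) = F.
Proof. apply functional_extensionality. intro y. f_equal. ring. Qed.

Lemma C2x_traveling_profile F c : C2x (fun t x => F (x - c * t)) ->
  forall y, ex_derive F y /\ ex_derive (Derive F) y.
Proof.
  intros HF y. destruct (HF 0 y) as [dF [dF' _]].
  unfold dx in dF'. rewrite traveling_frame_at_0 in dF, dF'. split; assumption.
Qed.

Lemma is_lim_scal_fin f x k (l : R) : is_lim f x l -> is_lim (fun y => k * f y) x (k * l).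
Proof. intro H. exact (is_lim_scal_l f k x l H). Qed.

Lemma is_lim_deriv_of_elliptic V U lam mu :
  (forall y, ex_derive V y /\ ex_derive (Derive V) y) ->
  (forall y, Derive (Derive V) y = lam * V y - mu * U y) ->
  is_lim V p_infty 0 -> is_lim U p_infty 0 -> is_lim (Derive V) p_infty 0.
Proof.
  intros rV eqV LV LU.
  apply (is_lim_deriv_p_infty V (Derive V) (Derive (Derive V)));
    [intro y; apply derivable_pt_lim_Derive, rV..|exact LV|].
  apply (is_lim_ext (fun y => lam * V y - mu * U y)); [intro y; symmetry; apply eqV|].
  replace (Finite 0) with (Finite (lam * 0 - mu * 0)) by (f_equal; ring).
  apply is_lim_minus'; apply is_lim_scal_fin; assumption.
Qed.

Definition wave_drift (c chi1 chi2 : R) (V1 V2 : R -> R) (y : R) : R :=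
  c + chi2 * Derive V2 y - chi1 * Derive V1 y.

Definition wave_potential (a b chi1 chi2 lam1 lam2 mu1 mu2 : R) (U V1 V2 : R -> R)
  (y : R) : R :=
  chi2 * (lam2 * V2 y - mu2 * U y) - chi1 * (lam1 * V1 y - mu1 * U y) + a - b * U y.

Section TravelingWaveProfile.

Context {a b chi1 chi2 lam1 lam2 mu1 mu2 c : R} {U V1 V2 : R -> R}.
Hypothesis Hsol : classical_solution a b chi1 chi2 lam1 lam2 mu1 mu2
  (fun t x => U (x - c * t)) (fun t x => V1 (x - c * t)) (fun t x => V2 (x - c * t)).

Lemma wave_profile_C2 :
  (forall y, ex_derive U y /\ ex_derive (Derive U) y) /\
  (forall y, ex_derive V1 y /\ ex_derive (Derive V1) y) /\
  (forall y, ex_derive V2 y /\ ex_derive (Derive V2) y).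
Proof.
  destruct Hsol as [_ [C2U [C2V1 [C2V2 _]]]].
  split; [|split]; eapply C2x_traveling_profile; eassumption.
Qed.

(* The [x]-derivatives at [t = 0] are those of the profiles, while [d/dt = -c d/dx]. *)
Lemma traveling_wave_profile_ode y :
  Derive (Derive V1) y = lam1 * V1 y - mu1 * U y /\
  Derive (Derive V2) y = lam2 * V2 y - mu2 * U y /\
  Derive (Derive U) y = - wave_drift c chi1 chi2 V1 V2 y * Derive U y
                        - wave_potential a b chi1 chi2 lam1 lam2 mu1 mu2 U V1 V2 y * U y.
Proof.
  destruct wave_profile_C2 as [rU [rV1 rV2]].
  destruct Hsol as [_ [_ [_ [_ Heqs]]]].
  destruct (Heqs 0 y) as [_ [Eu [Ev1 Ev2]]]. cbv beta zeta in Eu, Ev1, Ev2.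
  unfold dt, dxx, dx in Eu, Ev1, Ev2.
  rewrite !traveling_frame_at_0 in Eu, Ev1, Ev2.
  assert (Htime : Derive (fun s => U (y - c * s)) 0 = - c * Derive U y).
  { apply is_derive_unique. auto_derive; rewrite Rmult_0_r, Ropp_0, Rplus_0_r;
      [apply rU|]. rewrite Rmult_1_r. reflexivity. }
  assert (Hflux : Derive (fun x => U (x - c * 0) *
                    Derive (fun z => chi2 * V2 (z - c * 0) - chi1 * V1 (z - c * 0)) x) y
                  = Derive U y * (chi2 * Derive V2 y - chi1 * Derive V1 y)
                    + U y * (chi2 * Derive (Derive V2) y - chi1 * Derive (Derive V1) y)).
  { rewrite (Derive_ext _ (fun x => U x * (chi2 * Derive V2 x - chi1 * Derive V1 x))).
    - apply is_derive_unique. auto_derive; [repeat split; apply rU || apply rV1 || apply rV2|].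
      unfold Rminus. rewrite !Rmult_1_l. reflexivity.
    - intro x. replace (x - c * 0) with x by ring. f_equal. apply is_derive_unique.
      auto_derive; rewrite Rmult_0_r, Ropp_0, Rplus_0_r;
        [repeat split; apply rV1 || apply rV2|].
      unfold Rminus. rewrite !Rmult_1_l. reflexivity. }
  rewrite Htime, Hflux in Eu. replace (y - c * 0) with y in Eu, Ev1, Ev2 by ring.
  change (Derive (fun x => Derive U x) y) with (Derive (Derive U) y) in Eu.
  change (Derive (fun x => Derive V1 x) y) with (Derive (Derive V1) y) in Ev1.
  change (Derive (fun x => Derive V2 x) y) with (Derive (Derive V2) y) in Ev2.
  assert (D1 : Derive (Derive V1) y = lam1 * V1 y - mu1 * U y) by lra.
  assert (D2 : Derive (Derive V2) y = lam2 * V2 y - mu2 * U y) by lra.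
  rewrite D1, D2 in Eu. unfold wave_drift, wave_potential.
  repeat split; [exact D1|exact D2|lra].
Qed.

Lemma wave_drift_continuous y : continuity_pt (wave_drift c chi1 chi2 V1 V2) y.
Proof.
  destruct wave_profile_C2 as [_ [rV1 rV2]].
  apply derivable_continuous_pt, ex_derive_Reals_0. unfold wave_drift. auto_derive.
  repeat split; apply rV1 || apply rV2.
Qed.

Lemma wave_potential_continuous y :
  continuity_pt (wave_potential a b chi1 chi2 lam1 lam2 mu1 mu2 U V1 V2) y.
Proof.
  destruct wave_profile_C2 as [rU [rV1 rV2]].
  apply derivable_continuous_pt, ex_derive_Reals_0. unfold wave_potential. auto_derive.
  repeat split; apply rU || apply rV1 || apply rV2.
Qed.

Hypotheses (LU : is_lim U p_infty 0) (LV1 : is_lim V1 p_infty 0) (LV2 : is_lim V2 p_infty 0).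

Ltac is_lim_arith :=
  repeat first [apply is_lim_minus' | apply is_lim_plus' | apply is_lim_scal_fin
               | apply is_lim_const | assumption].

Lemma is_lim_wave_drift : is_lim (wave_drift c chi1 chi2 V1 V2) p_infty c.
Proof.
  destruct wave_profile_C2 as [_ [rV1 rV2]].
  assert (LP1 : is_lim (Derive V1) p_infty 0).
  { apply (is_lim_deriv_of_elliptic V1 U lam1 mu1); auto.
    intro y. apply traveling_wave_profile_ode. }
  assert (LQ1 : is_lim (Derive V2) p_infty 0).
  { apply (is_lim_deriv_of_elliptic V2 U lam2 mu2); auto.
    intro y. apply traveling_wave_profile_ode. }
  replace (Finite c) with (Finite (c + chi2 * 0 - chi1 * 0)) by (f_equal; ring).
  unfold wave_drift. is_lim_arith.
Qed.

Lemma is_lim_wave_potential :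
  is_lim (wave_potential a b chi1 chi2 lam1 lam2 mu1 mu2 U V1 V2) p_infty a.
Proof.
  replace (Finite a) with (Finite (chi2 * (lam2 * 0 - mu2 * 0) - chi1 * (lam1 * 0 - mu1 * 0)
                                   + a - b * 0)) by (f_equal; ring).
  unfold wave_potential. is_lim_arith.
Qed.

End TravelingWaveProfile.

Theorem theoremC (a b chi1 chi2 lam1 lam2 mu1 mu2 : R) :
  0 < a -> 0 < b -> 0 <= chi1 -> 0 <= chi2 ->
  0 < lam1 -> 0 < lam2 -> 0 < mu1 -> 0 < mu2 ->
  ~ (exists (c : R) (U V1 V2 : R -> R),
        c < 2 * sqrt a /\
        traveling_wave a b chi1 chi2 lam1 lam2 mu1 mu2 c U V1 V2).
Proof.
  intros Ha Hb _ _ _ _ _ _ [c [U [V1 [V2 [Hc [Hnn [Hsol [LUm [_ [_ [LU [LV1 LV2]]]]]]]]]]]].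
  destruct (wave_profile_C2 Hsol) as [rU _].
  assert (dU : forall y, derivable_pt_lim U y (Derive U y))
    by (intro y; apply derivable_pt_lim_Derive, rU).
  assert (dU1 : forall y, derivable_pt_lim (Derive U) y (Derive (Derive U) y))
    by (intro y; apply derivable_pt_lim_Derive, rU).
  assert (ode := fun y => proj2 (proj2 (traveling_wave_profile_ode Hsol y))).
  destruct (proj2 (is_lim_spec _ _ _) LUm
              (mkposreal (a / b) ltac:(apply Rdiv_lt_0_compat; lra))) as [M HM].
  assert (Upos : forall y, 0 < U y).
  { apply (linear_ode2_nonneg_pos U _ _ _ _ dU dU1 (wave_drift_continuous Hsol)
             (wave_potential_continuous Hsol) ode (M - 1)); [intro y; apply Hnn|].
    specialize (HM (M - 1) ltac:(lra)). simpl in HM. apply Rabs_def2 in HM. lra. }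
  exact (linear_ode2_no_positive_decaying U _ _ _ _ c a Ha Hc dU dU1 ode Upos LU
           (is_lim_wave_drift Hsol LU LV1 LV2) (is_lim_wave_potential LU LV1 LV2)).
Qed.
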